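(* Let $\gamma:(0,\infty)\times(0,\infty)\to[0,\infty)$ be a function such that $v\mapsto\gamma(u,v)$ is non-decreasing for every fixed $u>0$. Then for every $N\ge 2$, all pairwise distinct points $x_1,\dots,x_N\in\mathbb{R}^3\setminus\{0\}$ and every $r>0$, $$\sum_{\substack{j,k=1\\ j\ne k}}^N \frac{\gamma(|x_j-x_k|,\,r|x_j|)}{|x_j|}\;x_j\cdot(x_j-x_k)\ \ge\ 0.$$ *)

From HB Require Import structures.
From mathcomp Require Import all_boot all_order all_algebra.
From mathcomp Require Import reals.
Set Implicit Arguments. Unset Strict Implicit. Unset Printing Implicit Defensive.
Import Order.TTheory GRing.Theory Num.Theory.
Local Open Scope ring_scope.

Definition dot3 {R : realType} (u v : 'rV[R]_3) : R := \sum_(i < 3) u ord0 i * v ord0 i.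

Definition enorm3 {R : realType} (u : 'rV[R]_3) : R := Num.sqrt (dot3 u u).

(* Symmetrize: it suffices that the terms of each pair {j, k} have a
   nonnegative sum.  Write a = |x_j| >= b = |x_k|, c = x_j . x_k and
   g_j >= g_k >= 0 for the two values of gamma (same first argument, monotone
   in the second).  The pair contributes g_j A + g_k B with A = (a^2 - c)/a and
   B = (b^2 - c)/b.  Cauchy-Schwarz gives c <= a b <= a^2, so A >= 0 and
   A + B = (a + b)(a b - c)/(a b) >= 0, whence
   g_j A + g_k B = (g_j - g_k) A + g_k (A + B) >= 0. *)
From HB Require Import structures.
From mathcomp Require Import all_boot all_order all_algebra.
From mathcomp Require Import reals ring.
Import Order.TTheory GRing.Theory Num.Theory.
Local Open Scope ring_scope.

Lemma sumr_offdiag_ge0 {R : numDomainType} {I : finType} (f : I -> I -> R) :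
  (forall j k, j != k -> 0 <= f j k + f k j) ->
  0 <= \sum_j \sum_(k | k != j) f j k.
Proof.
move=> f_sym_ge0; set S := \sum_j _.
have S_swap : S = \sum_j \sum_(k | k != j) f k j.
  rewrite /S (exchange_big_dep xpredT) //=.
  by apply: eq_bigr => j _; apply: eq_bigl => k; rewrite eq_sym.
have S2_ge0 : 0 <= S + S.
  rewrite [X in _ + X]S_swap -big_split /=.
  apply: sumr_ge0 => j _; rewrite -big_split sumr_ge0 // => k.
  by rewrite eq_sym; apply: f_sym_ge0.
by rewrite -mulr2n pmulrn_lge0 in S2_ge0.
Qed.

Lemma weighted_pair_ge0 {R : realFieldType} (a b c gj gk : R) :
  0 < b -> b <= a -> c <= a * b -> 0 <= gk -> gk <= gj ->
  0 <= gj / a * (a ^+ 2 - c) + gk / b * (b ^+ 2 - c).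
Proof.
move=> b_gt0 le_ba c_le gk_ge0 le_gkj.
have a_gt0 : 0 < a by exact: lt_le_trans le_ba.
have ba_neq0 : (b != 0) && (a != 0) by rewrite !gt_eqF.
pose A := (a ^+ 2 - c) / a; pose B := (b ^+ 2 - c) / b.
have A_ge0 : 0 <= A.
  by rewrite divr_ge0 ?(ltW a_gt0) // subr_ge0 (le_trans c_le) // expr2 ler_pM2l.
have AB_ge0 : 0 <= A + B.
  have -> : A + B = (a + b) * (a * b - c) / (a * b) by rewrite /A /B; field.
  by rewrite divr_ge0 ?mulr_ge0 ?subr_ge0 // ltW ?addr_gt0.
have -> : gj / a * (a ^+ 2 - c) + gk / b * (b ^+ 2 - c) = (gj - gk) * A + gk * (A + B).
  by rewrite /A /B; field.
by apply: addr_ge0; apply: mulr_ge0; rewrite ?subr_ge0.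
Qed.

Section Dot3.
Context {R : realType}.
Implicit Types p q s : 'rV[R]_3.

Lemma dot3C p q : dot3 p q = dot3 q p.
Proof. by apply: eq_bigr => i _; rewrite mulrC. Qed.

Lemma dot3Br p q s : dot3 p (q - s) = dot3 p q - dot3 p s.
Proof. by rewrite /dot3 -sumrB; apply: eq_bigr => i _; rewrite !mxE mulrBr. Qed.

Lemma dot3N p : dot3 (- p) (- p) = dot3 p p.
Proof. by apply: eq_bigr => i _; rewrite mxE mulrNN. Qed.

Lemma dot3_ge0 p : 0 <= dot3 p p.
Proof. by apply: sumr_ge0 => i _; rewrite -expr2 sqr_ge0. Qed.

Lemma dot3_gt0 p : p != 0 -> 0 < dot3 p p.
Proof.
move=> p_neq0; rewrite lt_def dot3_ge0 andbT; apply: contra p_neq0 => /eqP p2_eq0.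
apply/eqP/rowP => i; rewrite mxE; apply/eqP; rewrite -[_ == 0]orbb -mulf_eq0.
by apply/eqP; apply: (psumr_eq0P _ p2_eq0) => // j _; rewrite -expr2 sqr_ge0.
Qed.

Lemma dot3_sqr_le p q : dot3 p q ^+ 2 <= dot3 p p * dot3 q q.
Proof.
rewrite /dot3 !big_ord_recr !big_ord0 /= !add0r -subr_ge0.
set p0 := p _ _; set p1 := p _ _; set p2 := p _ _.
set q0 := q _ _; set q1 := q _ _; set q2 := q _ _.
(* Lagrange's identity *)
have -> : (p0 * p0 + p1 * p1 + p2 * p2) * (q0 * q0 + q1 * q1 + q2 * q2)
    - (p0 * q0 + p1 * q1 + p2 * q2) ^+ 2
  = (p0 * q1 - p1 * q0) ^+ 2 + (p0 * q2 - p2 * q0) ^+ 2 + (p1 * q2 - p2 * q1) ^+ 2.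
  by ring.
by rewrite !addr_ge0 ?sqr_ge0.
Qed.

Lemma sqr_enorm3 p : enorm3 p ^+ 2 = dot3 p p.
Proof. by rewrite sqr_sqrtr ?dot3_ge0. Qed.

Lemma enorm3_gt0 p : p != 0 -> 0 < enorm3 p.
Proof. by move=> p_neq0; rewrite sqrtr_gt0 dot3_gt0. Qed.

Lemma enorm3_subC p q : enorm3 (p - q) = enorm3 (q - p).
Proof. by rewrite -opprB /enorm3 dot3N. Qed.

Lemma dot3_le_enorm3 p q : dot3 p q <= enorm3 p * enorm3 q.
Proof.
rewrite /enorm3 -sqrtrM ?dot3_ge0 // (le_trans (ler_norm _)) //.
by rewrite -sqrtr_sqr ler_wsqrtr // dot3_sqr_le.
Qed.

End Dot3.

Section PairInteraction.
Context {R : realType}.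
Variables (gamma : R -> R -> R) (r : R).
Hypothesis gamma_ge0 : forall u v, 0 < u -> 0 < v -> 0 <= gamma u v.
Hypothesis gamma_mono :
  forall u v1 v2, 0 < u -> 0 < v1 -> v1 <= v2 -> gamma u v1 <= gamma u v2.
Hypothesis r_gt0 : 0 < r.

Definition pair_term (p q : 'rV[R]_3) : R :=
  gamma (enorm3 (p - q)) (r * enorm3 p) / enorm3 p * dot3 p (p - q).

Lemma pair_term_sym_ge0 p q : p != 0 -> q != 0 -> p != q ->
  0 <= pair_term p q + pair_term q p.
Proof.
wlog le_qp : p q / enorm3 q <= enorm3 p => [hwlog|] p_neq0 q_neq0 p_neq_q.
  have [le_qp|/ltW le_pq] := leP (enorm3 q) (enorm3 p); first exact: hwlog.
  by rewrite addrC; apply: hwlog; rewrite // eq_sym.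
have d_gt0 : 0 < enorm3 (p - q) by rewrite enorm3_gt0 ?subr_eq0.
have rq_gt0 : 0 < r * enorm3 q by rewrite mulr_gt0 ?enorm3_gt0.
rewrite /pair_term (enorm3_subC q p) !dot3Br (dot3C q p) -!sqr_enorm3.
apply: weighted_pair_ge0; rewrite ?enorm3_gt0 ?dot3_le_enorm3 ?gamma_ge0 //.
by rewrite gamma_mono // ler_pM2l.
Qed.

End PairInteraction.

Theorem lemma5p4 (R : realType) (gamma : R -> R -> R)
  (gamma_ge0 : forall u v, 0 < u -> 0 < v -> 0 <= gamma u v)
  (gamma_mono : forall u v1 v2, 0 < u -> 0 < v1 -> v1 <= v2 -> gamma u v1 <= gamma u v2)
  (N : nat) (hN : (2 <= N)%N) (x : 'I_N -> 'rV[R]_3)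
  (hx0 : forall j, x j != 0)
  (hxinj : injective x)
  (r : R) (hr : 0 < r) :
  0 <= \sum_(j < N) \sum_(k < N | k != j)
         gamma (enorm3 (x j - x k)) (r * enorm3 (x j)) / enorm3 (x j)
         * dot3 (x j) (x j - x k).
Proof.
apply: (sumr_offdiag_ge0 (fun j k => pair_term gamma r (x j) (x k))) => j k j_neq_k.
by apply: pair_term_sym_ge0 => //; rewrite (inj_eq hxinj).
Qed.
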